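(* Let $V$ be $\eta_*$-regular and $t=N^{\omega-1/3}$ with $\phi_*/2>1/3-\omega>0$. For real $E$ write $\xi(E)=a+bi$ ($a,b$ real). Then for all $E$ with $a_-\le a\le 3/4$, one has $b\asymp t|a-a_-|^{1/2}$.
   Context: $V=\mathrm{diag}(V_1\le\dots\le V_N)$ deterministic real, $\mu_V=\frac1N\sum_i\delta_{V_i}$, $m_V(z)=\int\frac{d\mu_V(x)}{x-z}$. $V$ is $\eta_*$-regular ($\eta_*=N^{-\phi_*}$, $0<\phi_*\le2/3$) if for some $C_V$: $C_V^{-1}\frac{\eta}{\sqrt{|E|+\eta}}\le\mathrm{Im}\,m_V(E+i\eta)\le C_V\frac{\eta}{\sqrt{|E|+\eta}}$ for $-1\le E\le0$, $\eta_*\le\eta\le10$; $C_V^{-1}\sqrt{|E|+\eta}\le\mathrm{Im}\,m_V\le C_V\sqrt{|E|+\eta}$ for $0\le E\le1$, $\eta_*^{1/2}\sqrt{|E|}+\eta_*\le\eta\le10$; no $V_i\in[-1,-\eta_*]$; $\|V\|\le N^{C_V}$. $m_{fc,t}$ solves $m_{fc,t}(z)=m_V(z+tm_{fc,t}(z))$ (unique solution with positive imaginary part), $\xi(z)=z+tm_{fc,t}(z)$, extended to real $E$ as boundary values. $\xi_-=a_-\in[-3/4,3/4]$ is the unique solution in that interval of $1=t\int\frac{d\mu_V(x)}{(x-\xi_-)^2}$ (it satisfies $-\xi_-\asymp t^2$), and $E_-$ is defined by $\xi(E_-)=\xi_-$. *)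

(* classical reals. Complex numbers are represented by
   their real and imaginary parts. *)
From Stdlib Require Import Reals.
Open Scope R_scope.

Fixpoint rsum (n : nat) (f : nat -> R) : R :=
  match n with O => 0 | S k => rsum k f + f k end.

(* V : nat -> R, with entries V 0 <= ... <= V (N-1)  (paper's V_1..V_N). *)
(* m_V(x+iy) = (1/N) sum_i 1/(V_i - (x+iy)) : real and imaginary parts *)
Definition mV_re (N : nat) (V : nat -> R) (x y : R) : R :=
  / INR N * rsum N (fun i => (V i - x) / ((V i - x) ^ 2 + y ^ 2)).
Definition mV_im (N : nat) (V : nat -> R) (x y : R) : R :=
  / INR N * rsum N (fun i => y / ((V i - x) ^ 2 + y ^ 2)).

Definition sorted_V (N : nat) (V : nat -> R) : Prop :=
  forall i j, (i <= j < N)%nat -> V i <= V j.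

Definition regular (N : nat) (V : nat -> R) (etas CV : R) : Prop :=
  (forall E eta, -1 <= E <= 0 -> etas <= eta <= 10 ->
     / CV * (eta / sqrt (Rabs E + eta)) <= mV_im N V E eta /\
     mV_im N V E eta <= CV * (eta / sqrt (Rabs E + eta))) /\
  (forall E eta, 0 <= E <= 1 ->
     sqrt etas * sqrt (Rabs E) + etas <= eta <= 10 ->
     / CV * sqrt (Rabs E + eta) <= mV_im N V E eta /\
     mV_im N V E eta <= CV * sqrt (Rabs E + eta)) /\
  (forall i, (i < N)%nat -> ~ (-1 <= V i <= - etas)) /\
  (forall i, (i < N)%nat -> Rabs (V i) <= Rpower (INR N) CV).

(* (mre, mim) is a solution of m_{fc,t}(z) = m_V(z + t m_{fc,t}(z)) with
   Im m_{fc,t} > 0 on the upper half plane z = E + i eta, eta > 0. *)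
Definition is_mfc (N : nat) (V : nat -> R) (t : R) (mre mim : R -> R -> R) : Prop :=
  forall E eta, 0 < eta ->
    0 < mim E eta /\
    mre E eta = mV_re N V (E + t * mre E eta) (eta + t * mim E eta) /\
    mim E eta = mV_im N V (E + t * mre E eta) (eta + t * mim E eta).

(* xi(E) = a + i b is the boundary value lim_{eta -> 0+} xi(E + i eta),
   where xi(z) = z + t m_{fc,t}(z). *)
Definition xi_boundary (t : R) (mre mim : R -> R -> R) (E a b : R) : Prop :=
  forall eps, 0 < eps -> exists delta, 0 < delta /\
    forall eta, 0 < eta < delta ->
      Rabs (E + t * mre E eta - a) < eps /\
      Rabs (eta + t * mim E eta - b) < eps.

Definition is_xi_minus (N : nat) (V : nat -> R) (t am : R) : Prop :=
  -3/4 <= am <= 3/4 /\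
  (forall i, (i < N)%nat -> V i <> am) /\
  1 = t * (/ INR N * rsum N (fun i => / (V i - am) ^ 2)).

From Stdlib Require Import Reals Lra Psatz ZArith.
From Coquelicot Require Import Coquelicot.
Open Scope R_scope.

(* Write G(x, y) for the mean of |V_i - (x + i y)|^-2, so that Im m_V(x + i y) = y G(x, y).
   Letting eta -> 0+ in the self-consistent equation gives b = t b G(a, b) and t G(a, b) <= 1,
   hence t G(a, b) = 1 as soon as b > 0, while a_- is characterised by t G(a_-, 0) = 1.
   Regularity pins G to the square-root profile: G(x, y)^2 (|x| + y) ~ 1 left of the edge and
   y^2 G(x, y)^2 ~ x + y right of it. This first places a_- at distance ~ t^2 left of 0, and
   then gives b^2 ~ t^2 (a - a_-) directly when a >= -c t^2. For a_- <= a <= -c t^2, put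
   u = -a ~ -a_-: the identity G(a, 0) - G(a, b) = b^2 Gmix(a, b) with Gmix(a, b) ~ G(a, u) / u^2,
   and the comparison G(a, 0) - G(a_-, 0) ~ (a - a_-) G(a, u) / u, give b^2 ~ u (a - a_-). *)

Lemma rsum_ext n f g : (forall i, (i < n)%nat -> f i = g i) -> rsum n f = rsum n g.
Proof.
  induction n as [|n IH]; intros H; simpl; [reflexivity|].
  rewrite IH by (intros; apply H; lia). rewrite H by lia. reflexivity.
Qed.

Lemma rsum_le n f g : (forall i, (i < n)%nat -> f i <= g i) -> rsum n f <= rsum n g.
Proof.
  induction n as [|n IH]; intros H; simpl; [lra|].
  assert (f n <= g n) by (apply H; lia).
  assert (rsum n f <= rsum n g) by (apply IH; intros; apply H; lia).
  lra.
Qed.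

Lemma rsum_plus n f g : rsum n (fun i => f i + g i) = rsum n f + rsum n g.
Proof. induction n as [|n IH]; simpl; [lra|]. rewrite IH; ring. Qed.

Lemma rsum_scal n c f : rsum n (fun i => c * f i) = c * rsum n f.
Proof. induction n as [|n IH]; simpl; [lra|]. rewrite IH; ring. Qed.

Lemma rsum_nonneg n f : (forall i, (i < n)%nat -> 0 <= f i) -> 0 <= rsum n f.
Proof.
  induction n as [|n IH]; intros H; simpl; [lra|].
  assert (0 <= f n) by (apply H; lia).
  assert (0 <= rsum n f) by (apply IH; intros; apply H; lia).
  lra.
Qed.

Lemma rsum_term n f i :
  (forall j, (j < n)%nat -> 0 <= f j) -> (i < n)%nat -> f i <= rsum n f.
Proof.
  induction n as [|n IH]; intros H Hi; simpl; [lia|].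
  assert (0 <= f n) by (apply H; lia).
  destruct (Nat.eq_dec i n) as [->|Hne].
  - assert (0 <= rsum n f) by (apply rsum_nonneg; intros; apply H; lia). lra.
  - assert (f i <= rsum n f) by (apply IH; [intros; apply H|]; lia). lra.
Qed.

Definition avg (N : nat) (f : nat -> R) : R := / INR N * rsum N f.

Lemma inv_INR_pos N : (0 < N)%nat -> 0 < / INR N.
Proof. intros; apply Rinv_0_lt_compat, lt_0_INR; assumption. Qed.

Lemma avg_le N f g : (0 < N)%nat ->
  (forall i, (i < N)%nat -> f i <= g i) -> avg N f <= avg N g.
Proof.
  intros HN H; unfold avg.
  apply Rmult_le_compat_l; [left; apply inv_INR_pos; assumption | apply rsum_le; assumption].
Qed.

Lemma avg_ext N f g : (forall i, (i < N)%nat -> f i = g i) -> avg N f = avg N g.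
Proof. intros H; unfold avg; rewrite (rsum_ext N f g H); reflexivity. Qed.

Lemma avg_plus N f g : avg N (fun i => f i + g i) = avg N f + avg N g.
Proof. unfold avg; rewrite rsum_plus; ring. Qed.

Lemma avg_scal N c f : avg N (fun i => c * f i) = c * avg N f.
Proof. unfold avg; rewrite rsum_scal; ring. Qed.

Lemma avg_nonneg N f : (forall i, (i < N)%nat -> 0 <= f i) -> 0 <= avg N f.
Proof.
  intros H; unfold avg. destruct N as [|N]; [simpl; rewrite Rinv_0; lra|].
  apply Rmult_le_pos; [left; apply inv_INR_pos; lia | apply rsum_nonneg; assumption].
Qed.

Lemma avg_term N f i : (forall j, (j < N)%nat -> 0 <= f j) -> (i < N)%nat ->
  / INR N * f i <= avg N f.
Proof.
  intros H Hi; unfold avg.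
  apply Rmult_le_compat_l; [left; apply inv_INR_pos; lia | apply rsum_term; assumption].
Qed.

Lemma avg_le_combination2 N f g h c1 c2 : (0 < N)%nat ->
  (forall i, (i < N)%nat -> f i <= c1 * g i + c2 * h i) ->
  avg N f <= c1 * avg N g + c2 * avg N h.
Proof.
  intros HN H. rewrite <- !avg_scal, <- avg_plus. apply avg_le; assumption.
Qed.

Lemma avg_le_combination3 N f g h k c1 c2 : (0 < N)%nat ->
  (forall i, (i < N)%nat -> f i <= g i + c1 * h i + c2 * k i) ->
  avg N f <= avg N g + c1 * avg N h + c2 * avg N k.
Proof.
  intros HN H. rewrite <- !avg_scal, <- !avg_plus. apply avg_le; assumption.
Qed.

Definition Gz (N : nat) (V : nat -> R) (x y : R) : R :=
  avg N (fun i => / ((V i - x) ^ 2 + y ^ 2)).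

Lemma inv_sum_sq_nonneg u v : 0 <= / (u ^ 2 + v ^ 2).
Proof.
  destruct (Req_dec (u ^ 2 + v ^ 2) 0) as [E|E].
  - rewrite E, Rinv_0; lra.
  - left; apply Rinv_0_lt_compat. assert (0 <= u ^ 2 + v ^ 2) by nra. lra.
Qed.

Lemma Gz_nonneg N V x y : 0 <= Gz N V x y.
Proof. apply avg_nonneg; intros; apply inv_sum_sq_nonneg. Qed.

Lemma mV_im_Gz N V x y : mV_im N V x y = y * Gz N V x y.
Proof. unfold mV_im, Gz. rewrite <- avg_scal. reflexivity. Qed.

Lemma Gz_term_le N V x y i : (i < N)%nat ->
  / INR N * / ((V i - x) ^ 2 + y ^ 2) <= Gz N V x y.
Proof.
  intros Hi. apply (avg_term N (fun i => / ((V i - x) ^ 2 + y ^ 2))); [|assumption].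
  intros; apply inv_sum_sq_nonneg.
Qed.

Lemma Gz_decreasing N V x y1 y2 : (0 < N)%nat -> 0 <= y1 <= y2 ->
  (forall i, (i < N)%nat -> 0 < (V i - x) ^ 2 + y1 ^ 2) -> Gz N V x y2 <= Gz N V x y1.
Proof.
  intros HN Hy H. apply avg_le; [assumption|]. intros i Hi.
  apply Rinv_le_contravar; [apply H; assumption|]. nra.
Qed.

Lemma sum_sq_pos_r c y : 0 < y -> 0 < c ^ 2 + y ^ 2.
Proof.
  intros. assert (0 < y ^ 2) by (apply pow_lt; lra).
  assert (0 <= c ^ 2) by apply pow2_ge_0. lra.
Qed.

Lemma Rdiv_le_cross P Q A B : 0 < A -> 0 < B -> P * B <= Q * A -> P / A <= Q / B.
Proof.
  intros HA HB H. unfold Rdiv. apply (Rmult_le_reg_r (A * B)); [nra|].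
  replace (P * / A * (A * B)) with (P * B) by (field; lra).
  replace (Q * / B * (A * B)) with (Q * A) by (field; lra). assumption.
Qed.

Lemma pow2_le_inv x y : x ^ 2 <= y ^ 2 -> 0 <= y -> x <= y.
Proof. rewrite <- !Rsqr_pow2. apply Rsqr_incr_0_var. Qed.

Lemma inv_sq_le_inv_shift e m : 0 < m -> m ^ 2 <= e ^ 2 ->
  / (e ^ 2 + 0 ^ 2) <= 2 * / (e ^ 2 + m ^ 2).
Proof.
  intros Hm He. assert (0 < m ^ 2) by nra.
  rewrite <- (Rmult_1_l (/ (e ^ 2 + 0 ^ 2))).
  apply Rdiv_le_cross; nra.
Qed.

Lemma inv_sq_decomp e b : e <> 0 ->
  / (e ^ 2 + 0 ^ 2) = / (e ^ 2 + b ^ 2) + b ^ 2 * / (e ^ 2 * (e ^ 2 + b ^ 2)).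
Proof.
  intros He. assert (0 < e ^ 2) by (rewrite <- Rsqr_pow2; apply Rsqr_pos_lt; assumption).
  assert (0 <= b ^ 2) by apply pow2_ge_0. field; split; lra.
Qed.

Lemma inv_sq_shift_le e u b : 0 < u -> u ^ 2 / 4 <= e ^ 2 ->
  / (e ^ 2 * (e ^ 2 + b ^ 2)) <= 20 / u ^ 2 * / (e ^ 2 + u ^ 2).
Proof.
  intros Hu He. assert (0 < u ^ 2) by nra. assert (0 < e ^ 2) by nra.
  assert (0 <= b ^ 2) by nra.
  rewrite <- (Rmult_1_l (/ (e ^ 2 * _))).
  replace (20 / u ^ 2 * / (e ^ 2 + u ^ 2)) with (20 / (u ^ 2 * (e ^ 2 + u ^ 2))) by (field; lra).
  apply Rdiv_le_cross; nra.
Qed.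

Lemma inv_shift_le_decomp e u m b P0 : 0 < u -> 0 < m -> e <> 0 -> m ^ 2 + b ^ 2 <= P0 ->
  / (e ^ 2 + u ^ 2) <= P0 * / (e ^ 2 * (e ^ 2 + b ^ 2)) + 2 * / (e ^ 2 + m ^ 2).
Proof.
  intros Hu Hm He HP. assert (0 < e ^ 2) by (rewrite <- Rsqr_pow2; apply Rsqr_pos_lt; assumption).
  assert (0 <= b ^ 2) by nra. assert (0 < u ^ 2) by nra. assert (0 < m ^ 2) by nra.
  assert (0 <= / (e ^ 2 + m ^ 2)) by (left; apply Rinv_0_lt_compat; lra).
  assert (0 <= / (e ^ 2 * (e ^ 2 + b ^ 2))) by (left; apply Rinv_0_lt_compat; nra).
  rewrite <- (Rmult_1_l (/ (e ^ 2 + u ^ 2))).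
  destruct (Rle_lt_dec (e ^ 2) (m ^ 2)).
  - assert (1 / (e ^ 2 + u ^ 2) <= P0 / (e ^ 2 * (e ^ 2 + b ^ 2))); [|unfold Rdiv in *; nra].
    apply Rdiv_le_cross; nra.
  - assert (1 / (e ^ 2 + u ^ 2) <= 2 / (e ^ 2 + m ^ 2)); [|unfold Rdiv in *; nra].
    apply Rdiv_le_cross; nra.
Qed.

Lemma inv_sq_diff_le e u d : 0 < u -> u / 2 <= e \/ e <= -1/4 -> e <= d <= e + 1/8 ->
  / (e ^ 2 + 0 ^ 2) <= / (d ^ 2 + 0 ^ 2) + 20 * (d - e) / u * / (e ^ 2 + u ^ 2).
Proof.
  intros Hu [He|He] Hd.
  - assert (0 < e) by lra. assert (0 < d) by lra.
    replace (/ (e ^ 2 + 0 ^ 2)) with (/ (d ^ 2 + 0 ^ 2) + (d - e) * (d + e) / (e ^ 2 * d ^ 2))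
      by (field; lra).
    replace (20 * (d - e) / u * / (e ^ 2 + u ^ 2)) with (20 * (d - e) / (u * (e ^ 2 + u ^ 2)))
      by (field; nra).
    assert (0 < e ^ 2) by (apply pow_lt; lra). assert (0 < d ^ 2) by (apply pow_lt; lra).
    apply Rplus_le_compat_l, Rdiv_le_cross;
      [apply Rmult_lt_0_compat; lra | apply Rmult_lt_0_compat; nra |].
    assert (u ^ 3 <= 8 * e ^ 3) by (replace (8 * e ^ 3) with ((2 * e) ^ 3) by ring;
                                    apply pow_incr; lra).
    assert (u * e ^ 2 <= 2 * e * e ^ 2) by (apply Rmult_le_compat_r; lra).
    assert (Hu3 : u * (e ^ 2 + u ^ 2) <= 10 * e ^ 3) by nra.
    assert ((d + e) * (u * (e ^ 2 + u ^ 2)) <= (2 * d) * (10 * e ^ 3))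
      by (apply Rmult_le_compat; nra).
    assert (d * e ^ 3 <= e ^ 2 * d ^ 2) by nra.
    replace ((d - e) * (d + e) * (u * (e ^ 2 + u ^ 2)))
      with ((d - e) * ((d + e) * (u * (e ^ 2 + u ^ 2)))) by ring.
    replace (20 * (d - e) * (e ^ 2 * d ^ 2)) with ((d - e) * (20 * (e ^ 2 * d ^ 2))) by ring.
    apply Rmult_le_compat_l; lra.
  - assert (0 <= 20 * (d - e) / u * / (e ^ 2 + u ^ 2)).
    { apply Rmult_le_pos; [apply Rmult_le_pos; [lra | left; apply Rinv_0_lt_compat; lra]|].
      left; apply Rinv_0_lt_compat; nra. }
    assert (/ (e ^ 2 + 0 ^ 2) <= / (d ^ 2 + 0 ^ 2)); [|lra].
    apply Rinv_le_contravar; nra.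
Qed.

Lemma shift_far_le e d w M : 0 < w -> w <= M -> M ^ 2 <= d ^ 2 -> e <= d ->
  2 / M * (d - e) * / (d ^ 2 + w ^ 2) <= 2 * (2 / M) * (d - e) * / (d ^ 2 + M ^ 2).
Proof.
  intros Hw HM HMd Hd.
  assert (0 < w ^ 2) by (apply pow_lt; lra). assert (0 < M ^ 2) by (apply pow_lt; lra).
  replace (2 / M * (d - e) * / (d ^ 2 + w ^ 2)) with (2 * (d - e) / (M * (d ^ 2 + w ^ 2)))
    by (field; nra).
  replace (2 * (2 / M) * (d - e) * / (d ^ 2 + M ^ 2)) with (4 * (d - e) / (M * (d ^ 2 + M ^ 2)))
    by (field; nra).
  apply Rdiv_le_cross; [apply Rmult_lt_0_compat; nra | apply Rmult_lt_0_compat; nra |].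
  replace (2 * (d - e) * (M * (d ^ 2 + M ^ 2))) with ((d - e) * M * (2 * (d ^ 2 + M ^ 2))) by ring.
  replace (4 * (d - e) * (M * (d ^ 2 + w ^ 2))) with ((d - e) * M * (4 * (d ^ 2 + w ^ 2))) by ring.
  apply Rmult_le_compat_l; [apply Rmult_le_pos|]; nra.
Qed.

Lemma shift_near_le e d w M : 0 < w -> 0 < M -> 0 < e <= d -> d <= M ->
  2 / M * (d - e) * / (d ^ 2 + w ^ 2) <= / (e ^ 2 + 0 ^ 2) - / (d ^ 2 + 0 ^ 2).
Proof.
  intros Hw HM He Hd.
  assert (0 < e ^ 2) by (apply pow_lt; lra). assert (0 < d ^ 2) by (apply pow_lt; lra).
  assert (0 < w ^ 2) by (apply pow_lt; lra).
  replace (/ (e ^ 2 + 0 ^ 2) - / (d ^ 2 + 0 ^ 2)) with ((d - e) * (d + e) / (e ^ 2 * d ^ 2))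
    by (field; lra).
  replace (2 / M * (d - e) * / (d ^ 2 + w ^ 2)) with (2 * (d - e) / (M * (d ^ 2 + w ^ 2)))
    by (field; nra).
  apply Rdiv_le_cross; [apply Rmult_lt_0_compat; lra | apply Rmult_lt_0_compat; lra |].
  assert (d ^ 3 <= M * (d ^ 2 + w ^ 2)).
  { replace (d ^ 3) with (d * d ^ 2) by ring. apply Rle_trans with (M * d ^ 2);
      [apply Rmult_le_compat_r | apply Rmult_le_compat_l]; lra. }
  assert (2 * (e ^ 2 * d ^ 2) <= (d + e) * d ^ 3).
  { replace ((d + e) * d ^ 3) with (d ^ 2 * (d * d + e * d)) by ring.
    replace (2 * (e ^ 2 * d ^ 2)) with (d ^ 2 * (2 * e * e)) by ring.
    apply Rmult_le_compat_l; nra. }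
  assert ((d + e) * d ^ 3 <= (d + e) * (M * (d ^ 2 + w ^ 2))) by (apply Rmult_le_compat_l; lra).
  replace (2 * (d - e) * (e ^ 2 * d ^ 2)) with ((d - e) * (2 * (e ^ 2 * d ^ 2))) by ring.
  replace ((d - e) * (d + e) * (M * (d ^ 2 + w ^ 2)))
    with ((d - e) * ((d + e) * (M * (d ^ 2 + w ^ 2)))) by ring.
  apply Rmult_le_compat_l; lra.
Qed.

Lemma inv_sq_diff_ge e d w L : 0 < w -> 1 <= L -> L * w <= 1/4 ->
  0 < e \/ d <= -1/4 -> e <= d ->
  2 / (L * w) * (d - e) * / (d ^ 2 + w ^ 2) <=
  / (e ^ 2 + 0 ^ 2) - / (d ^ 2 + 0 ^ 2) + 8 * (d - e) * / (d ^ 2 + 0 ^ 2)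
  + 2 * (2 / (L * w)) * (d - e) * / (d ^ 2 + (L * w) ^ 2).
Proof.
  intros Hw HL HLw Hed Hd. assert (HM : 0 < L * w) by nra.
  assert (Hdne : d <> 0) by (destruct Hed; lra).
  assert (Hd2 : 0 < d ^ 2) by (rewrite <- Rsqr_pow2; apply Rsqr_pos_lt; assumption).
  assert (HC : 0 <= 2 * (2 / (L * w)) * (d - e) * / (d ^ 2 + (L * w) ^ 2)).
  { assert (0 < (L * w) ^ 2) by (apply pow_lt; lra).
    apply Rmult_le_pos; [apply Rmult_le_pos; [apply Rmult_le_pos|]|]; try lra.
    - left; apply Rdiv_lt_0_compat; lra.
    - left; apply Rinv_0_lt_compat; lra. }
  assert (HB : 0 <= 8 * (d - e) * / (d ^ 2 + 0 ^ 2))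
    by (apply Rmult_le_pos; [lra | left; apply Rinv_0_lt_compat; lra]).
  assert (HAB : 0 <= / (e ^ 2 + 0 ^ 2) - / (d ^ 2 + 0 ^ 2) + 8 * (d - e) * / (d ^ 2 + 0 ^ 2)).
  { destruct Hed as [He|Hd4].
    - assert (/ (d ^ 2 + 0 ^ 2) <= / (e ^ 2 + 0 ^ 2)) by (apply Rinv_le_contravar; nra).
      lra.
    - assert (0 < e ^ 2) by nra.
      replace (/ (e ^ 2 + 0 ^ 2) - / (d ^ 2 + 0 ^ 2) + 8 * (d - e) * / (d ^ 2 + 0 ^ 2))
        with ((d - e) * (8 * e ^ 2 + e + d) / (e ^ 2 * d ^ 2)) by (field; lra).
      apply Rmult_le_pos; [apply Rmult_le_pos; nra|].
      left; apply Rinv_0_lt_compat, Rmult_lt_0_compat; lra. }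
  assert (Hfar : (L * w) ^ 2 <= d ^ 2 ->
    2 / (L * w) * (d - e) * / (d ^ 2 + w ^ 2)
    <= 2 * (2 / (L * w)) * (d - e) * / (d ^ 2 + (L * w) ^ 2))
    by (intros; apply shift_far_le; nra).
  destruct Hed as [He|Hd4].
  - destruct (Rle_lt_dec d (L * w)) as [Hnear|Hfar'].
    + pose proof (shift_near_le e d w (L * w) Hw HM (conj He Hd) Hnear). lra.
    + assert (HLd : (L * w) ^ 2 <= d ^ 2) by (apply pow_incr; lra). specialize (Hfar HLd). lra.
  - assert (HLd : (L * w) ^ 2 <= d ^ 2) by nra. specialize (Hfar HLd). lra.
Qed.

Lemma right_profile_arith K t a b am : 1 <= K -> 0 < t -> 0 <= a -> 0 < b ->
  t ^ 2 * (a + b) <= K ^ 2 * b ^ 2 -> b ^ 2 <= K ^ 2 * t ^ 2 * (a + b) ->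
  t ^ 2 <= 2 * K ^ 2 * (- am) -> - am <= 4 * K ^ 2 * t ^ 2 ->
  b ^ 2 <= 8 * K ^ 6 * t ^ 2 * (a - am) /\ t ^ 2 * (a - am) <= 8 * K ^ 6 * b ^ 2.
Proof.
  intros HK Ht Ha Hb E1 E2 Hw1 Hw2.
  assert (HK2 : 1 <= K ^ 2) by nra.
  assert (HK6 : K ^ 2 <= K ^ 6) by (assert (1 <= K ^ 4) by nra; nra).
  assert (HK64 : K ^ 4 <= K ^ 6) by nra.
  split.
  - destruct (Rle_lt_dec b (2 * K ^ 2 * t ^ 2)).
    + assert (b ^ 2 <= (2 * K ^ 2 * t ^ 2) ^ 2) by (apply pow_incr; lra).
      assert (t ^ 2 * t ^ 2 <= t ^ 2 * (2 * K ^ 2 * (a - am)))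
        by (apply Rmult_le_compat_l; nra).
      assert (4 * K ^ 4 * (t ^ 2 * t ^ 2) <= 4 * K ^ 4 * (t ^ 2 * (2 * K ^ 2 * (a - am))))
        by (apply Rmult_le_compat_l; nra).
      nra.
    + assert (K ^ 2 * t ^ 2 * b <= b * (b / 2))
        by (replace (K ^ 2 * t ^ 2 * b) with (b * (K ^ 2 * t ^ 2)) by ring;
            apply Rmult_le_compat_l; lra).
      assert (b ^ 2 <= 2 * K ^ 2 * t ^ 2 * a) by nra.
      assert (0 <= t ^ 2 * a) by nra. assert (0 <= t ^ 2 * (- am)) by nra.
      assert (2 * K ^ 2 * (t ^ 2 * a) <= 8 * K ^ 6 * (t ^ 2 * a))
        by (apply Rmult_le_compat_r; nra).
      assert (0 <= 8 * K ^ 6 * (t ^ 2 * (- am))) by nra.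
      nra.
  - assert (Hbt : t ^ 2 <= K ^ 2 * b)
      by (apply Rmult_le_reg_r with b; [assumption | nra]).
    assert (t ^ 2 * b <= K ^ 2 * b * b) by (apply Rmult_le_compat_r; lra).
    assert (t ^ 2 * (- am) <= t ^ 2 * (4 * K ^ 2 * (K ^ 2 * b)))
      by (apply Rmult_le_compat_l; nra).
    assert (t ^ 2 * a <= K ^ 2 * b ^ 2) by nra.
    assert (K ^ 2 * b ^ 2 <= 4 * K ^ 6 * b ^ 2) by (apply Rmult_le_compat_r; nra).
    nra.
Qed.

Lemma mid_profile_arith K t a b am : 1 <= K -> 0 < t -> a <= 0 -> 4 * K ^ 2 * (- a) <= t ^ 2 ->
  t ^ 2 <= K ^ 2 * (- a + b) -> - a + b <= K ^ 2 * t ^ 2 ->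
  t ^ 2 <= 2 * K ^ 2 * (- am) -> - am <= 4 * K ^ 2 * t ^ 2 ->
  b ^ 2 <= 8 * K ^ 6 * t ^ 2 * (a - am) /\ t ^ 2 * (a - am) <= 8 * K ^ 6 * b ^ 2.
Proof.
  intros HK Ht Ha Ha4 E1 E2 Hw1 Hw2.
  assert (HK2 : 1 <= K ^ 2) by nra.
  assert (HK6 : K ^ 2 <= K ^ 6) by (assert (1 <= K ^ 4) by nra; nra).
  assert (Hbu : b <= K ^ 2 * t ^ 2) by lra.
  assert (Hbl : 3 * t ^ 2 <= 4 * K ^ 2 * b) by nra.
  assert (Hd1 : t ^ 2 <= 4 * K ^ 2 * (a - am)) by nra.
  assert (Hd2 : a - am <= 4 * K ^ 2 * t ^ 2) by lra.
  split.
  - assert (b ^ 2 <= (K ^ 2 * t ^ 2) ^ 2) by (apply pow_incr; nra).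
    assert (t ^ 2 * t ^ 2 <= t ^ 2 * (4 * K ^ 2 * (a - am))) by (apply Rmult_le_compat_l; nra).
    assert (K ^ 4 * (t ^ 2 * t ^ 2) <= K ^ 4 * (t ^ 2 * (4 * K ^ 2 * (a - am))))
      by (apply Rmult_le_compat_l; nra).
    assert (0 <= K ^ 6 * t ^ 2 * (a - am)) by (apply Rmult_le_pos; nra).
    nra.
  - assert (t ^ 2 * (a - am) <= t ^ 2 * (4 * K ^ 2 * t ^ 2)) by (apply Rmult_le_compat_l; nra).
    assert ((3 * t ^ 2) ^ 2 <= (4 * K ^ 2 * b) ^ 2) by (apply pow_incr; nra).
    assert (4 * K ^ 2 * t ^ 4 <= 4 * K ^ 2 * (16 * K ^ 4 * b ^ 2 / 9))
      by (apply Rmult_le_compat_l; nra).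
    assert (0 <= K ^ 6 * b ^ 2) by nra.
    nra.
Qed.

Definition boundary_eq (N : nat) (V : nat -> R) (t a b : R) : Prop :=
  0 <= b /\ (forall i, (i < N)%nat -> 0 < (V i - a) ^ 2 + b ^ 2) /\
  t * Gz N V a b <= 1 /\ b = t * b * Gz N V a b.

Lemma inv_succ_eventually_lt d : 0 < d ->
  exists M : nat, forall n, (M <= n)%nat -> 0 < / (INR n + 1) < d.
Proof.
  intros Hd. destruct (archimed (/ d)) as [Hup _].
  assert (0 < / d) by (apply Rinv_0_lt_compat; assumption).
  exists (Z.to_nat (up (/ d))). intros n Hn.
  assert (Hn' : / d < INR n + 1).
  { apply le_INR in Hn. rewrite INR_IZR_INZ, Z2Nat.id in Hn; [lra|].
    apply le_IZR; lra. }
  pose proof (pos_INR n).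
  split; [apply Rinv_0_lt_compat; lra|].
  rewrite <- (Rinv_inv d). apply Rinv_lt_contravar; [nra | exact Hn'].
Qed.

Lemma is_lim_seq_inv_succ : is_lim_seq (fun n => / (INR n + 1)) 0.
Proof.
  apply is_lim_seq_Reals; intros e He.
  destruct (inv_succ_eventually_lt e He) as [M HM]; exists M; intros n Hn.
  destruct (HM n Hn). unfold Rdist. rewrite Rabs_right; lra.
Qed.

Lemma xi_boundary_seq t mre mim E a b : xi_boundary t mre mim E a b ->
  is_lim_seq (fun n => E + t * mre E (/ (INR n + 1))) a /\
  is_lim_seq (fun n => / (INR n + 1) + t * mim E (/ (INR n + 1))) b.
Proof.
  intros Hx. split; apply is_lim_seq_Reals; intros e He;
    destruct (Hx e He) as [d [Hd Hclose]];
    destruct (inv_succ_eventually_lt d Hd) as [M HM]; exists M; intros n Hn;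
    destruct (Hclose _ (HM n Hn)); assumption.
Qed.

Lemma mfc_Gz_equation N V t mre mim E eta : is_mfc N V t mre mim -> 0 < t -> 0 < eta ->
  let y := eta + t * mim E eta in
  0 < y /\ y = eta + t * y * Gz N V (E + t * mre E eta) y.
Proof.
  intros Hm Ht Heta y. destruct (Hm E eta Heta) as [Hpos [_ Him]].
  rewrite mV_im_Gz in Him. fold y in Him.
  split; [unfold y; nra|]. unfold y at 1. rewrite Him. ring.
Qed.

Lemma sum_sq_lower_bound N V t x y i : (0 < N)%nat -> 0 < t -> 0 < y ->
  t * Gz N V x y < 1 -> (i < N)%nat -> t / INR N < (V i - x) ^ 2 + y ^ 2.
Proof.
  intros HN Ht Hy HtG Hi.
  pose proof (sum_sq_pos_r (V i - x) y Hy) as Hq.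
  pose proof (Gz_term_le N V x y i Hi). pose proof (lt_0_INR N HN).
  assert (t * (/ INR N * / ((V i - x) ^ 2 + y ^ 2)) < 1) by nra.
  apply (Rmult_lt_reg_r (/ ((V i - x) ^ 2 + y ^ 2))); [apply Rinv_0_lt_compat; lra|].
  rewrite Rinv_r by lra. unfold Rdiv. lra.
Qed.

Lemma is_lim_seq_sum_sq (c : R) xs ys (a b : R) :
  is_lim_seq xs a -> is_lim_seq ys b ->
  is_lim_seq (fun n => (c - xs n) ^ 2 + ys n ^ 2) ((c - a) ^ 2 + b ^ 2).
Proof.
  intros Lx Ly.
  apply is_lim_seq_ext with (fun n => (c - xs n) * (c - xs n) + ys n * ys n);
    [intros; ring|].
  replace ((c - a) ^ 2 + b ^ 2) with ((c - a) * (c - a) + b * b) by ring.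
  apply is_lim_seq_plus'; apply is_lim_seq_mult'; try assumption;
    apply is_lim_seq_minus'; auto using is_lim_seq_const.
Qed.

Lemma is_lim_seq_rsum n (f : nat -> nat -> R) (L : nat -> R) :
  (forall i, (i < n)%nat -> is_lim_seq (fun k => f k i) (L i)) ->
  is_lim_seq (fun k => rsum n (f k)) (rsum n L).
Proof.
  induction n as [|n IH]; intros H; simpl; [apply is_lim_seq_const|].
  apply is_lim_seq_plus'; [apply IH; intros i Hi|]; apply H; lia.
Qed.

Lemma is_lim_seq_Gz N V xs ys (a b : R) :
  is_lim_seq xs a -> is_lim_seq ys b ->
  (forall i, (i < N)%nat -> 0 < (V i - a) ^ 2 + b ^ 2) ->
  is_lim_seq (fun n => Gz N V (xs n) (ys n)) (Gz N V a b).
Proof.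
  intros Lx Ly Hpos. unfold Gz, avg.
  apply is_lim_seq_mult'; [apply is_lim_seq_const|].
  apply is_lim_seq_rsum; intros i Hi.
  apply (is_lim_seq_inv _ (Finite ((V i - a) ^ 2 + b ^ 2)));
    [apply is_lim_seq_sum_sq; assumption|].
  intros Hc; injection Hc. pose proof (Hpos i Hi). lra.
Qed.

(* Along eta = 1/(n+1), [t G < 1] keeps every denominator above [t / N], so [G] passes to
   the limit in [y = eta + t y G(x, y)]. *)
Lemma boundary_eq_of_xi_boundary N V t mre mim E a b :
  (0 < N)%nat -> 0 < t -> is_mfc N V t mre mim -> xi_boundary t mre mim E a b ->
  boundary_eq N V t a b.
Proof.
  intros HN Ht Hm Hx.
  set (eta := fun n : nat => / (INR n + 1)).
  set (xs := fun n => E + t * mre E (eta n)).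
  set (ys := fun n => eta n + t * mim E (eta n)).
  set (G := fun n => Gz N V (xs n) (ys n)).
  destruct (xi_boundary_seq t mre mim E a b Hx) as [Lx Ly].
  change (is_lim_seq xs a) in Lx. change (is_lim_seq ys b) in Ly.
  assert (Heta : forall n, 0 < eta n).
  { intros n; unfold eta; apply Rinv_0_lt_compat. pose proof (pos_INR n); lra. }
  assert (Heq : forall n, 0 < ys n /\ ys n = eta n + t * ys n * G n)
    by (intros n; exact (mfc_Gz_equation N V t mre mim E (eta n) Hm Ht (Heta n))).
  assert (HtG : forall n, t * G n < 1).
  { intros n. destruct (Heq n) as [Hy Hyeq]. pose proof (Heta n). nra. }
  assert (Hpos : forall i, (i < N)%nat -> 0 < (V i - a) ^ 2 + b ^ 2).
  { intros i Hi.
    assert (t / INR N <= (V i - a) ^ 2 + b ^ 2).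
    { refine (is_lim_seq_le (fun _ => t / INR N) _ (Finite (t / INR N)) (Finite _) _
        (is_lim_seq_const _) (is_lim_seq_sum_sq (V i) xs ys a b Lx Ly)).
      intros n. left. apply sum_sq_lower_bound; auto; [apply (proj1 (Heq n)) | apply HtG]. }
    assert (0 < t / INR N) by (apply Rdiv_lt_0_compat; [|apply lt_0_INR]; assumption).
    lra. }
  assert (LG : is_lim_seq G (Gz N V a b)) by (apply is_lim_seq_Gz; assumption).
  split; [|split; [exact Hpos | split]].
  - refine (is_lim_seq_le (fun _ => 0) ys (Finite 0) (Finite b) _ (is_lim_seq_const _) Ly).
    intros n; left; apply (proj1 (Heq n)).
  - refine (is_lim_seq_le (fun n => t * G n) (fun _ => 1) (Finite (t * Gz N V a b)) (Finite 1)
      _ (is_lim_seq_mult' _ _ _ _ (is_lim_seq_const t) LG) (is_lim_seq_const _)).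
    intros n; left; apply HtG.
  - assert (L2 : is_lim_seq ys (0 + t * b * Gz N V a b)).
    { apply is_lim_seq_ext with (fun n => eta n + t * ys n * G n);
        [intros n; symmetry; apply Heq|].
      apply is_lim_seq_plus'; [apply is_lim_seq_inv_succ|].
      apply is_lim_seq_mult'; [|exact LG].
      apply is_lim_seq_mult'; [apply is_lim_seq_const | exact Ly]. }
    apply is_lim_seq_unique in L2. apply is_lim_seq_unique in Ly.
    rewrite Ly in L2. injection L2. lra.
Qed.

Lemma boundary_eq_tG N V t a b : boundary_eq N V t a b -> 0 < b -> t * Gz N V a b = 1.
Proof.
  intros (_ & _ & _ & H) Hb. apply (Rmult_eq_reg_l b); [|lra]. rewrite Rmult_1_r. lra.
Qed.

Lemma sqrt_sandwich_sq q P c : 0 < c -> 0 <= q -> 0 <= P ->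
  / c * sqrt q <= P <= c * sqrt q -> q <= c ^ 2 * P ^ 2 /\ P ^ 2 <= c ^ 2 * q.
Proof.
  intros Hc Hq HP [Hlo Hhi].
  pose proof (sqrt_pos q) as Hr. pose proof (sqrt_sqrt q Hq) as Hrr.
  assert (Hlo' : sqrt q <= c * P).
  { apply (Rmult_le_compat_l c) in Hlo; [|lra].
    rewrite <- Rmult_assoc, Rinv_r, Rmult_1_l in Hlo; lra. }
  split; nra.
Qed.

Section Regularity.

Variables (N : nat) (V : nat -> R) (s CV K : R).
Hypotheses (HCV : 0 < CV) (HCVK : CV <= K) (Hs : 0 < s) (Hreg : regular N V s CV).

Lemma regular_left_Gz x y : -1 <= x <= 0 -> s <= y <= 10 ->
  1 <= K ^ 2 * (- x + y) * Gz N V x y ^ 2 /\ Gz N V x y ^ 2 * (- x + y) <= K ^ 2.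
Proof.
  intros Hx Hy. destruct Hreg as [Hleft _].
  destruct (Hleft x y Hx Hy) as [Hlo Hhi]. rewrite mV_im_Gz in Hlo, Hhi.
  rewrite Rabs_left1 in Hlo, Hhi by lra.
  set (q := - x + y) in *. set (G := Gz N V x y) in *.
  pose proof (Gz_nonneg N V x y) as HG; fold G in HG.
  assert (Hq : 0 < q) by (unfold q; lra).
  pose proof (sqrt_lt_R0 q Hq) as Hr. pose proof (sqrt_sqrt q (Rlt_le _ _ Hq)) as Hrr.
  assert (Hscale : forall c, c * (y / sqrt q) * (q / y) = c * sqrt q).
  { intros c. set (r := sqrt q) in *. rewrite <- Hrr. field. lra. }
  destruct (sqrt_sandwich_sq q (q * G) CV HCV (Rlt_le _ _ Hq) ltac:(nra)) as [H1 H2].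
  { rewrite <- (Hscale (/ CV)), <- (Hscale CV).
    replace (q * G) with (y * G * (q / y)) by (field; lra).
    assert (0 < q / y) by (apply Rdiv_lt_0_compat; lra).
    split; apply Rmult_le_compat_r; lra. }
  assert (CV ^ 2 <= K ^ 2) by (apply pow_incr; lra).
  split; nra.
Qed.

Lemma regular_right_Gz x y : 0 <= x <= 1 -> sqrt s * sqrt x + s <= y <= 10 ->
  x + y <= K ^ 2 * y ^ 2 * Gz N V x y ^ 2 /\ y ^ 2 * Gz N V x y ^ 2 <= K ^ 2 * (x + y).
Proof.
  intros Hx Hy. destruct Hreg as [_ [Hright _]].
  assert (0 <= sqrt s * sqrt x) by (apply Rmult_le_pos; apply sqrt_pos).
  destruct (Hright x y Hx) as [Hlo Hhi]; [rewrite Rabs_right; lra|].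
  rewrite mV_im_Gz in Hlo, Hhi. rewrite Rabs_right in Hlo, Hhi by lra.
  pose proof (Gz_nonneg N V x y).
  destruct (sqrt_sandwich_sq (x + y) (y * Gz N V x y) CV) as [H1 H2]; try nra.
  assert (CV ^ 2 <= K ^ 2) by (apply pow_incr; lra).
  replace ((y * Gz N V x y) ^ 2) with (y ^ 2 * Gz N V x y ^ 2) in H1, H2 by ring.
  split; nra.
Qed.

Lemma regular_gap i : (i < N)%nat -> V i < -1 \/ - s < V i.
Proof.
  intros Hi. destruct Hreg as [_ [_ [Hgap _]]]. pose proof (Hgap i Hi).
  destruct (Rlt_le_dec (V i) (-1)); [left; assumption | right].
  destruct (Rle_lt_dec (V i) (- s)); [exfalso; lra | assumption].
Qed.

End Regularity.

Definition Gmix (N : nat) (V : nat -> R) (x y : R) : R :=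
  avg N (fun i => / ((V i - x) ^ 2 * ((V i - x) ^ 2 + y ^ 2))).

Lemma Gz_real_decomp N V a b : (forall i, (i < N)%nat -> V i - a <> 0) ->
  Gz N V a 0 = Gz N V a b + b ^ 2 * Gmix N V a b.
Proof.
  intros Hne. unfold Gz, Gmix. rewrite <- avg_scal, <- avg_plus.
  apply avg_ext. intros i Hi. apply inv_sq_decomp, Hne, Hi.
Qed.

(* [t] and [s] stand for N^(omega - 1/3) and eta_* = 1 / N^phi_*. The hypotheses are what
   regularity gives (regular_left_Gz, regular_right_Gz, regular_gap) once N is large. *)
Section Edge.

Variables (N : nat) (V : nat -> R) (K t s : R).

Hypotheses (HN : (0 < N)%nat) (HK : 1 <= K) (Ht : 0 < t) (Hs : 0 < s)
  (HtK : t * K ^ 4 <= / 100) (Hst : 64 * K ^ 2 * s <= t ^ 2).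

Hypothesis Hleft : forall x y, -1 <= x <= 0 -> s <= y <= 10 ->
  1 <= K ^ 2 * (- x + y) * Gz N V x y ^ 2 /\ Gz N V x y ^ 2 * (- x + y) <= K ^ 2.

Hypothesis Hright : forall x y, 0 <= x <= 1 -> sqrt s * sqrt x + s <= y <= 10 ->
  x + y <= K ^ 2 * y ^ 2 * Gz N V x y ^ 2 /\ y ^ 2 * Gz N V x y ^ 2 <= K ^ 2 * (x + y).

Hypothesis Hgap : forall i, (i < N)%nat -> V i < -1 \/ - s < V i.

Local Notation G := (Gz N V).

Lemma K_pow_ge1 n : 1 <= K ^ n.
Proof. apply pow_R1_Rle; assumption. Qed.

Lemma t_small : t <= / 100.
Proof. pose proof (K_pow_ge1 4). nra. Qed.

Lemma s_small : s <= / 1000.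
Proof. pose proof (K_pow_ge1 2). pose proof t_small. nra. Qed.

Lemma gap_split x i : -3/4 <= x -> 2 * s <= - x -> (i < N)%nat ->
  - x / 2 <= V i - x \/ V i - x <= -1/4.
Proof. intros Hx1 Hx2 Hi. destruct (Hgap i Hi); [right | left]; lra. Qed.

(* At the height y0 = sqrt(s x) + s where right regularity starts to apply,
   y0^2 <= 2 s (x + y0) forces G(x, y0)^2 >= 1 / (2 K^2 s) >= 32 / t^2; below y0, G only grows. *)
Lemma tGz_gt1_right x y : 0 <= x <= 3/4 -> 0 <= y <= sqrt s * sqrt x + s ->
  (forall i, (i < N)%nat -> 0 < (V i - x) ^ 2 + y ^ 2) -> 1 < t * G x y.
Proof.
  intros Hx Hy Hpos. pose proof s_small. pose proof (K_pow_ge1 4).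
  set (p := sqrt s) in *. set (q := sqrt x) in *. set (y0 := p * q + s).
  assert (Hp : p * p = s) by (apply sqrt_sqrt; lra).
  assert (Hq : q * q = x) by (apply sqrt_sqrt; lra).
  assert (0 <= p) by apply sqrt_pos. assert (0 <= q) by apply sqrt_pos.
  assert (p <= 1) by nra. assert (q <= 1) by nra.
  destruct (Hright x y0) as [Hreg _]; [lra | unfold y0, p, q in *; split; nra |].
  assert (Hy02 : y0 ^ 2 <= 2 * s * (x + y0)).
  { unfold y0. replace ((p * q + s) ^ 2) with (s * (q + p) ^ 2) by (rewrite <- Hp; ring). nra. }
  set (G0 := G x y0) in *.
  assert (HG0 : 0 <= G0) by apply Gz_nonneg.
  assert (1 <= 2 * K ^ 2 * s * G0 ^ 2).
  { assert (x + y0 <= K ^ 2 * (2 * s * (x + y0)) * G0 ^ 2).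
    { apply Rle_trans with (K ^ 2 * y0 ^ 2 * G0 ^ 2); [exact Hreg|].
      apply Rmult_le_compat_r; [nra | apply Rmult_le_compat_l; nra]. }
    assert (0 < x + y0) by (unfold y0; nra). nra. }
  assert (64 * K ^ 2 * s * G0 ^ 2 <= t ^ 2 * G0 ^ 2)
    by (apply Rmult_le_compat_r; [apply pow2_ge_0 | exact Hst]).
  assert (16 <= (t * G0) ^ 2) by (rewrite Rpow_mult_distr; lra).
  assert (0 <= t * G0) by (apply Rmult_le_pos; lra).
  assert (4 <= t * G0) by nra.
  assert (G0 <= G x y) by (apply Gz_decreasing; auto; unfold y0; lra).
  nra.
Qed.

(* The gap keeps the V_i at distance >= |x|/4 from x, so G(x, 0) <= 2 G(x, |x|/4). *)
Lemma Gz_real_left_bound x : -3/4 <= x -> 4 * s <= - x -> - x * G x 0 ^ 2 <= 4 * K ^ 2.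
Proof.
  intros Hx1 Hx2. set (m := - x / 4).
  assert (HG : G x 0 <= 2 * G x m).
  { unfold Gz. rewrite <- avg_scal. apply avg_le; [assumption|]. intros i Hi.
    apply inv_sq_le_inv_shift; [unfold m; lra|].
    destruct (gap_split x i Hx1 ltac:(lra) Hi); unfold m; nra. }
  destruct (Hleft x m) as [_ Hm]; [lra | pose proof s_small; unfold m; lra|].
  pose proof (Gz_nonneg N V x 0). pose proof (Gz_nonneg N V x m).
  assert (G x 0 ^ 2 <= 4 * G x m ^ 2) by nra.
  assert (0 <= G x m ^ 2) by nra.
  unfold m in *. nra.
Qed.

Lemma edge_location am : -3/4 <= am <= 3/4 -> (forall i, (i < N)%nat -> V i <> am) ->
  t * G am 0 = 1 -> t ^ 2 <= 2 * K ^ 2 * (- am) /\ - am <= 4 * K ^ 2 * t ^ 2.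
Proof.
  intros Ham Hne Heq. pose proof (K_pow_ge1 2). pose proof s_small.
  assert (Hpos : forall i, (i < N)%nat -> 0 < (V i - am) ^ 2 + 0 ^ 2).
  { intros i Hi. assert (V i - am <> 0) by (pose proof (Hne i Hi); lra). nra. }
  assert (Hneg : am < 0).
  { destruct (Rlt_le_dec am 0) as [|Ham0]; [assumption | exfalso].
    assert (0 <= sqrt s * sqrt am) by (apply Rmult_le_pos; apply sqrt_pos).
    assert (1 < t * G am 0) by (apply tGz_gt1_right; [lra | lra | exact Hpos]). lra. }
  assert (HGs : G am s <= G am 0) by (apply Gz_decreasing; auto; lra).
  pose proof (Gz_nonneg N V am s).
  destruct (Hleft am s) as [Hs1 _]; [lra | lra |].
  assert (Hlow : t ^ 2 <= K ^ 2 * (- am + s)).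
  { assert (HtGs : 0 <= t * G am s <= 1) by (split; [nra | rewrite <- Heq; nra]).
    replace (t ^ 2) with (t ^ 2 * 1) by ring.
    apply Rle_trans with (t ^ 2 * (K ^ 2 * (- am + s) * G am s ^ 2));
      [apply Rmult_le_compat_l; nra|].
    replace (t ^ 2 * (K ^ 2 * (- am + s) * G am s ^ 2))
      with (K ^ 2 * (- am + s) * (t * G am s) ^ 2) by ring.
    assert ((t * G am s) ^ 2 <= 1) by nra.
    assert (0 <= K ^ 2 * (- am + s)) by nra. nra. }
  assert (Hlow' : t ^ 2 <= 2 * K ^ 2 * (- am)) by nra.
  split; [exact Hlow'|].
  assert (H4s : 4 * s <= - am) by nra.
  pose proof (Gz_real_left_bound am ltac:(lra) H4s).
  replace (- am) with (t ^ 2 * (- am * G am 0 ^ 2))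
    by (replace (t ^ 2 * (- am * G am 0 ^ 2)) with (- am * (t * G am 0) ^ 2) by ring;
        rewrite Heq; ring).
  nra.
Qed.

Lemma boundary_b_le_10 a b : -1 <= a <= 3/4 -> boundary_eq N V t a b -> 0 < b -> b <= 10.
Proof.
  intros Ha Hbd Hb. pose proof (boundary_eq_tG N V t a b Hbd Hb) as HtG.
  destruct (Rle_lt_dec b 10) as [|Hb10]; [assumption | exfalso].
  assert (G a b <= G a 10)
    by (apply Gz_decreasing; auto; try lra; intros; apply sum_sq_pos_r; lra).
  pose proof (Gz_nonneg N V a 10).
  assert (HtK2 : t ^ 2 * K ^ 2 <= / 10000).
  { pose proof (K_pow_ge1 3).
    assert (t * K <= t * K ^ 4) by (apply Rmult_le_compat_l; nra).
    assert (0 <= t * K) by nra. nra. }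
  assert (HG10 : G a 10 ^ 2 <= K ^ 2 / 9).
  { destruct (Rle_lt_dec a 0).
    - destruct (Hleft a 10) as [_ HR]; [lra | pose proof s_small; lra|].
      unfold Rdiv. nra.
    - destruct (Hright a 10) as [_ HR]; [lra| |].
      { pose proof s_small.
        assert (sqrt s <= 1) by (rewrite <- sqrt_1; apply sqrt_le_1_alt; lra).
        assert (sqrt a <= 1) by (rewrite <- sqrt_1; apply sqrt_le_1_alt; lra).
        pose proof (sqrt_pos s). pose proof (sqrt_pos a). nra. }
      unfold Rdiv. nra. }
  assert (1 <= t * G a 10) by (rewrite <- HtG; apply Rmult_le_compat_l; lra).
  assert ((t * G a 10) ^ 2 <= t ^ 2 * (K ^ 2 / 9))
    by (rewrite Rpow_mult_distr; apply Rmult_le_compat_l; nra).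
  unfold Rdiv in *. nra.
Qed.

Lemma edge_profile_right a b am : 0 <= a <= 3/4 -> boundary_eq N V t a b ->
  t ^ 2 <= 2 * K ^ 2 * (- am) -> - am <= 4 * K ^ 2 * t ^ 2 ->
  b ^ 2 <= 8 * K ^ 6 * t ^ 2 * (a - am) /\ t ^ 2 * (a - am) <= 8 * K ^ 6 * b ^ 2.
Proof.
  intros Ha Hbd Hw1 Hw2. pose proof Hbd as (Hb0 & Hpos & HtG & _).
  assert (0 <= sqrt s * sqrt a) by (apply Rmult_le_pos; apply sqrt_pos).
  assert (Hb : sqrt s * sqrt a + s < b).
  { destruct (Rlt_le_dec (sqrt s * sqrt a + s) b) as [|Hle]; [assumption | exfalso].
    assert (1 < t * G a b) by (apply tGz_gt1_right; auto; lra). lra. }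
  pose proof (boundary_eq_tG N V t a b Hbd ltac:(lra)) as Ht1.
  pose proof (boundary_b_le_10 a b ltac:(lra) Hbd ltac:(lra)).
  destruct (Hright a b) as [H1 H2]; [lra | lra |].
  assert (HGt : G a b ^ 2 * t ^ 2 = 1)
    by (rewrite <- Rpow_mult_distr, Rmult_comm, Ht1; ring).
  apply (right_profile_arith K t a b am); try lra; nra.
Qed.

Lemma edge_profile_mid a b am : a <= 0 -> 4 * K ^ 2 * (- a) <= t ^ 2 -> boundary_eq N V t a b ->
  t ^ 2 <= 2 * K ^ 2 * (- am) -> - am <= 4 * K ^ 2 * t ^ 2 ->
  b ^ 2 <= 8 * K ^ 6 * t ^ 2 * (a - am) /\ t ^ 2 * (a - am) <= 8 * K ^ 6 * b ^ 2.
Proof.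
  intros Ha Ha4 Hbd Hw1 Hw2. pose proof Hbd as (Hb0 & Hpos & HtG & _).
  assert (Ha1 : -1 <= a) by (pose proof t_small; nra).
  assert (Hbs : s < b).
  { destruct (Rlt_le_dec s b) as [|Hle]; [assumption | exfalso].
    assert (G a s <= G a b) by (apply Gz_decreasing; auto; lra).
    destruct (Hleft a s) as [HR _]; [lra | pose proof s_small; lra |].
    pose proof (Gz_nonneg N V a s).
    assert (0 <= t * G a s <= 1) by (split; nra).
    assert (K ^ 2 * (- a + s) <= t ^ 2 / 2) by nra.
    assert (1 <= t ^ 2 / 2 * G a s ^ 2).
    { apply Rle_trans with (K ^ 2 * (- a + s) * G a s ^ 2); [exact HR|].
      apply Rmult_le_compat_r; nra. }
    replace (t ^ 2 / 2 * G a s ^ 2) with ((t * G a s) ^ 2 / 2) in * by field.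
    nra. }
  pose proof (boundary_eq_tG N V t a b Hbd ltac:(lra)) as Ht1.
  pose proof (boundary_b_le_10 a b ltac:(lra) Hbd ltac:(lra)).
  destruct (Hleft a b) as [H1 H2]; [lra | lra |].
  assert (HGt : G a b ^ 2 * t ^ 2 = 1)
    by (rewrite <- Rpow_mult_distr, Rmult_comm, Ht1; ring).
  apply (mid_profile_arith K t a b am); try lra; nra.
Qed.

Lemma Gz_diag_bounds x : -1 <= x <= 0 -> s <= - x ->
  1 <= 2 * K ^ 2 * (- x) * G x (- x) ^ 2 /\ G x (- x) ^ 2 * (2 * (- x)) <= K ^ 2.
Proof.
  intros Hx Hsx. pose proof s_small.
  destruct (Hleft x (- x)) as [H1 H2]; [lra | lra |].
  replace (- x + - x) with (2 * (- x)) in H1, H2 by ring. split; lra.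
Qed.

Lemma Gz_diag_pos x : -1 <= x <= 0 -> s <= - x -> 0 < G x (- x).
Proof.
  intros Hx Hsx. destruct (Gz_diag_bounds x Hx Hsx) as [Hd _].
  pose proof (Gz_nonneg N V x (- x)). destruct (Rle_lt_dec (G x (- x)) 0); [|assumption].
  replace (G x (- x)) with 0 in Hd by lra. lra.
Qed.

Lemma Gz_far_le_quarter x : -1 <= x <= 0 -> s <= - x -> 32 * K ^ 4 * (- x) <= 10 ->
  4 * G x (32 * K ^ 4 * (- x)) <= G x (- x).
Proof.
  intros Hx Hsx HL. pose proof (K_pow_ge1 4). pose proof (K_pow_ge1 2).
  destruct (Gz_diag_bounds x Hx Hsx) as [Hd _].
  destruct (Hleft x (32 * K ^ 4 * (- x))) as [_ HB]; [lra | nra |].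
  set (Gd := G x (- x)) in *. set (GL := G x (32 * K ^ 4 * (- x))) in *.
  pose proof (Gz_nonneg N V x (- x)). pose proof (Gz_nonneg N V x (32 * K ^ 4 * (- x))).
  assert (HB' : GL ^ 2 * (32 * K ^ 4 * (- x)) <= K ^ 2).
  { apply Rle_trans with (GL ^ 2 * (- x + 32 * K ^ 4 * (- x))); [|exact HB].
    apply Rmult_le_compat_l; nra. }
  assert (16 * GL ^ 2 <= Gd ^ 2).
  { apply Rmult_le_reg_r with (32 * K ^ 4 * (- x)); [nra|].
    assert (16 * K ^ 2 * 1 <= 16 * K ^ 2 * (2 * K ^ 2 * (- x) * Gd ^ 2))
      by (apply Rmult_le_compat_l; lra).
    nra. }
  apply pow2_le_inv; [rewrite Rpow_mult_distr; lra | assumption].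
Qed.

Section LeftEdge.

Variables a am : R.

Hypotheses (Ham : -3/4 <= am) (Hama : am <= a) (Hu : t ^ 2 <= 4 * K ^ 2 * (- a))
  (Hw1 : t ^ 2 <= 2 * K ^ 2 * (- am)) (Hw2 : - am <= 4 * K ^ 2 * t ^ 2).

Local Notation u := (- a).
Local Notation w := (- am).
Local Notation L := (32 * K ^ 4).

Lemma left_edge_scales : 0 < u /\ 16 * s <= u /\ L * w <= / 50 /\ w <= 16 * K ^ 4 * u.
Proof.
  pose proof (K_pow_ge1 2). pose proof (K_pow_ge1 4).
  assert (0 < t ^ 2) by (apply pow_lt; lra).
  assert (HK8 : t ^ 2 * K ^ 8 <= / 10000).
  { replace (t ^ 2 * K ^ 8) with ((t * K ^ 4) ^ 2) by ring.
    replace (/ 10000) with ((/ 100) ^ 2) by field. apply pow_incr; split; nra. }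
  assert (K ^ 6 <= K ^ 8) by (pose proof (K_pow_ge1 2); nra).
  assert (t ^ 2 * K ^ 6 <= t ^ 2 * K ^ 8) by (apply Rmult_le_compat_l; lra).
  assert (32 * K ^ 4 * w <= 32 * K ^ 4 * (4 * K ^ 2 * t ^ 2)) by (apply Rmult_le_compat_l; lra).
  repeat split; nra.
Qed.

Lemma gap_split_a i : (i < N)%nat -> u / 2 <= V i - a \/ V i - a <= -1/4.
Proof. pose proof left_edge_scales. intros Hi. apply gap_split; [lra | lra | assumption]. Qed.

Lemma gap_split_am i : (i < N)%nat -> w / 2 <= V i - am \/ V i - am <= -1/4.
Proof. pose proof left_edge_scales. intros Hi. apply gap_split; [lra | lra | assumption]. Qed.

Lemma Gz_real_diff_upper : G a 0 <= G am 0 + 20 * (a - am) / u * G a u.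
Proof.
  pose proof left_edge_scales as (Hu0 & _ & HLw & _). pose proof (K_pow_ge1 4).
  unfold Gz. rewrite <- avg_scal, <- avg_plus. apply avg_le; [assumption|]. intros i Hi.
  replace (20 * (a - am) / u) with (20 * ((V i - am) - (V i - a)) / u) by (field; lra).
  apply inv_sq_diff_le; [lra | apply gap_split_a, Hi | nra].
Qed.

Lemma Gz_real_diff_lower_averaged :
  2 / (L * w) * (a - am) * G am w <=
  G a 0 + (8 * (a - am) - 1) * G am 0 + 2 * (2 / (L * w)) * (a - am) * G am (L * w).
Proof.
  pose proof left_edge_scales as (Hu0 & _ & HLw & _). pose proof (K_pow_ge1 4).
  assert (w <= / 50) by nra.
  unfold Gz. rewrite <- avg_scal. apply avg_le_combination3; [assumption|]. intros i Hi.
  pose proof (inv_sq_diff_ge (V i - a) (V i - am) w L ltac:(lra) ltac:(lra) ltac:(lra))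
    as Hdiff.
  replace ((V i - am) - (V i - a)) with (a - am) in Hdiff by ring.
  assert (Hterm : 2 / (L * w) * (a - am) * / ((V i - am) ^ 2 + w ^ 2) <=
     / ((V i - a) ^ 2 + 0 ^ 2) - / ((V i - am) ^ 2 + 0 ^ 2)
     + 8 * (a - am) * / ((V i - am) ^ 2 + 0 ^ 2)
     + 2 * (2 / (L * w)) * (a - am) * / ((V i - am) ^ 2 + (L * w) ^ 2)).
  { apply Hdiff; [|lra].
    destruct (gap_split_am i Hi); [left | right]; [destruct (gap_split_a i Hi)|]; lra. }
  lra.
Qed.

Lemma tGz_diag_am_large : 16 * L * w <= t * G am w.
Proof.
  pose proof left_edge_scales as (Hu0 & Hsu & HLw & _).
  pose proof (K_pow_ge1 4). pose proof (K_pow_ge1 10).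
  destruct (Gz_diag_bounds am ltac:(lra) ltac:(lra)) as [Hd _].
  pose proof (Gz_nonneg N V am w).
  assert (HA : 2 * K ^ 2 * w * (256 * L ^ 2 * w ^ 2) <= t ^ 2).
  { assert (w ^ 3 <= (4 * K ^ 2 * t ^ 2) ^ 3) by (apply pow_incr; lra).
    assert (HtK8 : (t ^ 2 * K ^ 8) ^ 2 <= (/ 10000) ^ 2).
    { apply pow_incr. split; [nra|].
      replace (t ^ 2 * K ^ 8) with ((t * K ^ 4) ^ 2) by ring.
      replace (/ 10000) with ((/ 100) ^ 2) by field. apply pow_incr; split; nra. }
    assert (524288 * K ^ 10 * w ^ 3 <= 524288 * K ^ 10 * (4 * K ^ 2 * t ^ 2) ^ 3)
      by (apply Rmult_le_compat_l; lra).
    assert (0 < t ^ 2) by (apply pow_lt; lra).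
    replace (524288 * K ^ 10 * (4 * K ^ 2 * t ^ 2) ^ 3)
      with (33554432 * (t ^ 2 * K ^ 8) ^ 2 * t ^ 2) in * by ring.
    nra. }
  assert (t ^ 2 <= (t * G am w) ^ 2 * (2 * K ^ 2 * w)) by nra.
  assert (256 * L ^ 2 * w ^ 2 <= (t * G am w) ^ 2)
    by (apply Rmult_le_reg_l with (2 * K ^ 2 * w); nra).
  apply pow2_le_inv; [nra | apply Rmult_le_pos; lra].
Qed.

Lemma Gz_diag_compare : G a u <= 4 * K ^ 4 * G am w.
Proof.
  pose proof left_edge_scales as (Hu0 & Hsu & HLw & Hwu).
  pose proof (K_pow_ge1 4).
  destruct (Gz_diag_bounds a ltac:(lra) ltac:(lra)) as [_ Hau].
  destruct (Gz_diag_bounds am ltac:(lra) ltac:(lra)) as [Hdw _].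
  pose proof (Gz_nonneg N V am w).
  assert (K ^ 2 <= 16 * K ^ 8 * G am w ^ 2 * (2 * u)).
  { assert (K ^ 4 * G am w ^ 2 * (2 * w) <= K ^ 4 * G am w ^ 2 * (2 * (16 * K ^ 4 * u)))
      by (apply Rmult_le_compat_l; nra).
    assert (K ^ 2 * 1 <= K ^ 2 * (2 * K ^ 2 * w * G am w ^ 2))
      by (apply Rmult_le_compat_l; nra).
    nra. }
  assert (G a u ^ 2 <= (4 * K ^ 4 * G am w) ^ 2)
    by (apply Rmult_le_reg_r with (2 * u); nra).
  apply pow2_le_inv; [assumption | nra].
Qed.

Lemma Gz_real_diff_lower : t * G am 0 = 1 ->
  (a - am) * G am w / (2 * L * w) <= G a 0 - G am 0.
Proof.
  intros Heq. pose proof left_edge_scales as (Hu0 & Hsu & HLw & _).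
  pose proof (K_pow_ge1 4). pose proof Gz_real_diff_lower_averaged as Hraw.
  assert (HLw0 : 0 < L * w) by nra.
  assert (Hq : 4 * G am (L * w) <= G am w) by (apply Gz_far_le_quarter; nra).
  pose proof tGz_diag_am_large as Hlarge.
  assert (HG0 : G am 0 = / t) by (apply (Rmult_eq_reg_l t); [rewrite Heq; field|]; lra).
  set (X := (a - am) * G am w / (L * w)).
  assert (H1 : 2 / (L * w) * (a - am) * G am w = 2 * X) by (unfold X; field; lra).
  assert (H2 : 2 * (2 / (L * w)) * (a - am) * G am (L * w) <= X).
  { unfold X. replace (2 * (2 / (L * w)) * (a - am) * G am (L * w))
      with ((a - am) / (L * w) * (4 * G am (L * w))) by (field; lra).
    replace ((a - am) * G am w / (L * w)) with ((a - am) / (L * w) * G am w) by (field; lra).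
    apply Rmult_le_compat_l; [unfold Rdiv; apply Rmult_le_pos; [lra | left; apply Rinv_0_lt_compat; lra]|]; lra. }
  assert (H3 : 8 * (a - am) * G am 0 <= X / 2).
  { rewrite HG0. unfold X.
    replace (8 * (a - am) * / t) with ((a - am) / (L * w * t) * (8 * (L * w))) by (field; lra).
    replace ((a - am) * G am w / (L * w) / 2) with ((a - am) / (L * w * t) * (t * G am w / 2))
      by (field; lra).
    apply Rmult_le_compat_l; [unfold Rdiv; apply Rmult_le_pos; [lra | left; apply Rinv_0_lt_compat; nra] | lra]. }
  replace ((a - am) * G am w / (2 * L * w)) with (X / 2) by (unfold X; field; lra).
  lra.
Qed.

Lemma V_ne_a i : (i < N)%nat -> V i - a <> 0.
Proof. pose proof left_edge_scales. intros Hi. destruct (gap_split_a i Hi); lra. Qed.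

Lemma Gmix_upper b : Gmix N V a b <= 20 / u ^ 2 * G a u.
Proof.
  pose proof left_edge_scales as (Hu0 & _ & HLw & Hwu). pose proof (K_pow_ge1 4).
  unfold Gmix, Gz. rewrite <- avg_scal. apply avg_le; [assumption|]. intros i Hi.
  apply inv_sq_shift_le; [lra|].
  assert (w <= / 50) by nra. destruct (gap_split_a i Hi); nra.
Qed.

Lemma Gmix_lower b : b ^ 2 <= 16 * K ^ 8 * u ^ 2 ->
  G a u <= 2 * ((L ^ 2 + 16 * K ^ 8) * u ^ 2) * Gmix N V a b.
Proof.
  intros Hb. pose proof left_edge_scales as (Hu0 & Hsu & HLw & Hwu). pose proof (K_pow_ge1 4).
  assert (Hsplit : G a u <= (L ^ 2 + 16 * K ^ 8) * u ^ 2 * Gmix N V a b + 2 * G a (L * u)).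
  { unfold Gz, Gmix. apply avg_le_combination2; [assumption|]. intros i Hi.
    apply inv_shift_le_decomp; [lra | nra | apply V_ne_a, Hi | nra]. }
  assert (4 * G a (L * u) <= G a u) by (apply Gz_far_le_quarter; nra).
  lra.
Qed.

Lemma boundary_b_le_Kt b : boundary_eq N V t a b -> 0 < b -> t * G a b = 1 -> b <= K ^ 2 * t ^ 2.
Proof.
  intros Hbd Hb Ht1. pose proof left_edge_scales as (Hu0 & Hsu & _ & _).
  pose proof (K_pow_ge1 2). assert (0 < t ^ 2) by (apply pow_lt; lra).
  destruct (Rle_lt_dec b s) as [Hbs|Hbs]; [nra|].
  pose proof (boundary_b_le_10 a b ltac:(lra) Hbd Hb).
  destruct (Hleft a b) as [_ HR]; [lra | lra |].
  assert (HGt : G a b ^ 2 * t ^ 2 = 1)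
    by (rewrite <- Rpow_mult_distr, Rmult_comm, Ht1; ring).
  assert (u + b <= K ^ 2 * t ^ 2).
  { assert (Hid : G a b ^ 2 * (u + b) * t ^ 2 = u + b).
    { replace (G a b ^ 2 * (u + b) * t ^ 2) with ((G a b ^ 2 * t ^ 2) * (u + b)) by ring.
      rewrite HGt; ring. }
    rewrite <- Hid. apply Rmult_le_compat_r; lra. }
  lra.
Qed.

Lemma edge_profile_left_upper b : t * G am 0 = 1 -> boundary_eq N V t a b ->
  b ^ 2 <= 166400 * K ^ 10 * t ^ 2 * (a - am).
Proof.
  intros Heq Hbd. pose proof left_edge_scales as (Hu0 & Hsu & HLw & Hwu).
  pose proof (K_pow_ge1 4). pose proof (K_pow_ge1 8). pose proof (K_pow_ge1 10).
  pose proof Hbd as (Hb0 & _ & _ & _).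
  destruct (Rle_lt_dec b 0) as [Hb|Hb].
  { replace b with 0 by lra. assert (0 <= K ^ 10 * t ^ 2 * (a - am)) by
      (apply Rmult_le_pos; [apply Rmult_le_pos; [lra | apply pow2_ge_0] | lra]). nra. }
  pose proof (boundary_eq_tG N V t a b Hbd Hb) as Ht1.
  assert (HGb : G a b = G am 0) by (apply (Rmult_eq_reg_l t); lra).
  assert (Hb2 : b ^ 2 <= 16 * K ^ 8 * u ^ 2).
  { pose proof (boundary_b_le_Kt b Hbd Hb Ht1).
    replace (16 * K ^ 8 * u ^ 2) with ((4 * K ^ 4 * u) ^ 2) by ring.
    assert (K ^ 2 * t ^ 2 <= K ^ 2 * (4 * K ^ 2 * u))
      by (apply Rmult_le_compat_l; [apply pow2_ge_0 | lra]).
    apply pow_incr; lra. }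
  assert (HGu : 0 < G a u) by (apply Gz_diag_pos; lra).
  pose proof (Gz_real_decomp N V a b V_ne_a) as Hdec.
  pose proof Gz_real_diff_upper as Hup.
  pose proof (Gmix_lower b Hb2) as Hlow.
  set (P0 := (L ^ 2 + 16 * K ^ 8) * u ^ 2) in Hlow.
  assert (Hmix : b ^ 2 * Gmix N V a b <= 20 * (a - am) / u * G a u) by lra.
  assert (b ^ 2 * G a u <= 2 * P0 * (20 * (a - am) / u) * G a u).
  { assert (0 <= P0) by (unfold P0; nra).
    assert (b ^ 2 * G a u <= b ^ 2 * (2 * P0 * Gmix N V a b)) by (apply Rmult_le_compat_l; nra).
    assert (2 * P0 * (b ^ 2 * Gmix N V a b) <= 2 * P0 * (20 * (a - am) / u * G a u))
      by (apply Rmult_le_compat_l; lra).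
    nra. }
  assert (Hb2' : b ^ 2 <= 2 * P0 * (20 * (a - am) / u)) by (apply Rmult_le_reg_r with (G a u); lra).
  replace (2 * P0 * (20 * (a - am) / u)) with (41600 * K ^ 8 * (u * (a - am))) in Hb2'
    by (unfold P0; field; lra).
  assert (u * (a - am) <= 4 * K ^ 2 * t ^ 2 * (a - am)) by (apply Rmult_le_compat_r; lra).
  nra.
Qed.

Lemma edge_profile_left_lower b : t * G am 0 = 1 -> boundary_eq N V t a b ->
  t ^ 2 * (a - am) <= 327680 * K ^ 14 * b ^ 2.
Proof.
  intros Heq Hbd. pose proof left_edge_scales as (Hu0 & Hsu & HLw & Hwu).
  pose proof (K_pow_ge1 4). pose proof Hbd as (_ & _ & HtG & _).
  assert (HGb : G a b <= G am 0) by (apply (Rmult_le_reg_l t); lra).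
  pose proof (Gz_real_decomp N V a b V_ne_a) as Hdec.
  pose proof (Gz_real_diff_lower Heq) as Hlow.
  pose proof (Gmix_upper b) as Hmix.
  pose proof Gz_diag_compare as Hcmp.
  assert (HGw : 0 < G am w) by (apply Gz_diag_pos; lra).
  assert (HLw0 : 0 < L * w) by nra.
  assert (Hb2 : 0 <= b ^ 2) by apply pow2_ge_0.
  assert (Hc : (a - am) * G am w / (2 * L * w) <= b ^ 2 * (20 / u ^ 2 * (4 * K ^ 4 * G am w))).
  { apply Rle_trans with (b ^ 2 * Gmix N V a b); [lra|].
    apply Rmult_le_compat_l; [lra|]. apply Rle_trans with (20 / u ^ 2 * G a u); [lra|].
    apply Rmult_le_compat_l; [|lra].
    unfold Rdiv. apply Rmult_le_pos; [lra | left; apply Rinv_0_lt_compat, pow_lt; lra]. }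
  assert (Hu2 : 0 < u ^ 2) by (apply pow_lt; lra).
  assert (Hc2 : (a - am) * u ^ 2 <= 160 * K ^ 4 * L * w * b ^ 2).
  { apply Rmult_le_reg_r with (G am w / (2 * L * w) / u ^ 2).
    - unfold Rdiv. apply Rmult_lt_0_compat; [apply Rmult_lt_0_compat|]; try lra;
        apply Rinv_0_lt_compat; lra.
    - replace ((a - am) * u ^ 2 * (G am w / (2 * L * w) / u ^ 2))
        with ((a - am) * G am w / (2 * L * w)) by (field; lra).
      replace (160 * K ^ 4 * L * w * b ^ 2 * (G am w / (2 * L * w) / u ^ 2))
        with (b ^ 2 * (20 / u ^ 2 * (4 * K ^ 4 * G am w))) by (field; lra).
      exact Hc. }
  assert (Ht4 : (t ^ 2) ^ 2 <= (4 * K ^ 2 * u) ^ 2) by (apply pow_incr; split; nra).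
  assert (Hmono : (a - am) * (t ^ 2) ^ 2 <= (a - am) * (4 * K ^ 2 * u) ^ 2)
    by (apply Rmult_le_compat_l; lra).
  assert (Hw' : 160 * K ^ 4 * L * w * b ^ 2 <= 160 * K ^ 4 * L * (4 * K ^ 2 * t ^ 2) * b ^ 2)
    by (apply Rmult_le_compat_r; [lra | apply Rmult_le_compat_l; nra]).
  assert (Ht2 : 0 < t ^ 2) by (apply pow_lt; lra).
  apply Rmult_le_reg_l with (t ^ 2); [exact Ht2|].
  replace ((a - am) * (4 * K ^ 2 * u) ^ 2) with (16 * K ^ 4 * ((a - am) * u ^ 2)) in Hmono by ring.
  assert (16 * K ^ 4 * ((a - am) * u ^ 2) <= 16 * K ^ 4 * (160 * K ^ 4 * L * w * b ^ 2))
    by (apply Rmult_le_compat_l; nra).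
  nra.
Qed.

End LeftEdge.

Lemma edge_profile am a b : -3/4 <= am <= 3/4 -> (forall i, (i < N)%nat -> V i <> am) ->
  t * G am 0 = 1 -> am <= a <= 3/4 -> boundary_eq N V t a b ->
  b ^ 2 <= 1000000 * K ^ 14 * (t ^ 2 * (a - am)) /\
  t ^ 2 * (a - am) <= 1000000 * K ^ 14 * b ^ 2.
Proof.
  intros Ham Hne Heq Ha Hbd. destruct (edge_location am Ham Hne Heq) as [Hw1 Hw2].
  pose proof (K_pow_ge1 14).
  assert (K ^ 6 <= K ^ 14) by (apply Rle_pow; [assumption | lia]).
  assert (K ^ 10 <= K ^ 14) by (apply Rle_pow; [assumption | lia]).
  assert (0 <= t ^ 2 * (a - am)) by (apply Rmult_le_pos; [apply pow2_ge_0 | lra]).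
  assert (0 <= b ^ 2) by apply pow2_ge_0.
  destruct (Rle_lt_dec 0 a).
  - destruct (edge_profile_right a b am ltac:(lra) Hbd Hw1 Hw2). split; nra.
  - destruct (Rle_lt_dec (4 * K ^ 2 * (- a)) (t ^ 2)).
    + destruct (edge_profile_mid a b am ltac:(lra) ltac:(lra) Hbd Hw1 Hw2). split; nra.
    + assert (b ^ 2 <= 166400 * K ^ 10 * t ^ 2 * (a - am))
        by (apply (edge_profile_left_upper a am); auto; lra).
      assert (t ^ 2 * (a - am) <= 327680 * K ^ 14 * b ^ 2)
        by (apply (edge_profile_left_lower a am); auto; lra).
      split; nra.
Qed.

End Edge.


Lemma sqrt_comparable b D t C : 0 <= b -> 0 <= D -> 1 <= C -> 0 < t ->
  b ^ 2 <= C * (t ^ 2 * D) -> t ^ 2 * D <= C * b ^ 2 ->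
  / C * (t * sqrt D) <= b /\ b <= C * (t * sqrt D).
Proof.
  intros Hb HD HC Ht H1 H2.
  set (r := t * sqrt D).
  assert (Hr0 : 0 <= r) by (unfold r; apply Rmult_le_pos; [lra | apply sqrt_pos]).
  assert (Hr2 : r ^ 2 = t ^ 2 * D) by (unfold r; rewrite Rpow_mult_distr, pow2_sqrt; auto).
  split.
  - assert (r <= C * b).
    { apply pow2_le_inv; [|nra]. rewrite Rpow_mult_distr, Hr2.
      assert (C * b ^ 2 <= C ^ 2 * b ^ 2) by (apply Rmult_le_compat_r; nra). lra. }
    apply Rmult_le_reg_l with C; [lra|]. rewrite <- Rmult_assoc, Rinv_r, Rmult_1_l; lra.
  - apply pow2_le_inv; [|nra]. rewrite Rpow_mult_distr, Hr2.
    assert (C * (t ^ 2 * D) <= C ^ 2 * (t ^ 2 * D)) by (apply Rmult_le_compat_r; nra). lra.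
Qed.

Lemma Rpower_INR_eventually_le al c : 0 < al -> 0 < c ->
  exists N0 : nat, forall N, (N0 <= N)%nat -> Rpower (INR N) (- al) <= c.
Proof.
  intros Hal Hc. set (M := Rpower c (- / al)).
  assert (HM : 0 < M) by apply exp_pos.
  destruct (archimed M) as [Hup _].
  exists (Z.to_nat (up M)). intros N HN.
  assert (HNM : M < INR N).
  { apply le_INR in HN. rewrite INR_IZR_INZ, Z2Nat.id in HN; [lra|].
    apply le_IZR; lra. }
  rewrite Rpower_Ropp.
  assert (HMal : Rpower M al = / c).
  { unfold M. rewrite Rpower_mult.
    replace (- / al * al) with (Ropp 1) by (field; lra).
    rewrite Rpower_Ropp, Rpower_1; [reflexivity | assumption]. }
  assert (Hlt : / c < Rpower (INR N) al)
    by (rewrite <- HMal; apply Rlt_Rpower_l; [assumption | split; assumption]).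
  rewrite <- (Rinv_inv c). left. apply Rinv_lt_contravar; [|exact Hlt].
  apply Rmult_lt_0_compat; [apply Rinv_0_lt_compat; assumption | apply exp_pos].
Qed.

Lemma large_N_parameters phis omega K : 0 < 1/3 - omega < phis / 2 -> 1 <= K ->
  exists N0 : nat, forall N, (N0 <= N)%nat ->
    Rpower (INR N) (omega - 1/3) * K ^ 4 <= / 100 /\
    64 * K ^ 2 * Rpower (INR N) (- phis) <= Rpower (INR N) (omega - 1/3) ^ 2.
Proof.
  intros Hom HK. set (al := 1/3 - omega).
  assert (HK4 : 0 < K ^ 4) by (apply pow_lt; lra).
  assert (HK2 : 0 < K ^ 2) by (apply pow_lt; lra).
  destruct (Rpower_INR_eventually_le al (/ (100 * K ^ 4))) as [N1 HN1];
    [unfold al; lra | apply Rinv_0_lt_compat; lra|].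
  destruct (Rpower_INR_eventually_le (phis - 2 * al) (/ (64 * K ^ 2))) as [N2 HN2];
    [unfold al; lra | apply Rinv_0_lt_compat; lra|].
  exists (max N1 N2). intros N HN.
  set (t := Rpower (INR N) (omega - 1/3)). set (s := Rpower (INR N) (- phis)).
  assert (Ht : t <= / (100 * K ^ 4))
    by (unfold t; replace (omega - 1/3) with (- al) by (unfold al; ring); apply HN1; lia).
  assert (Hs : s = t ^ 2 * Rpower (INR N) (- (phis - 2 * al))).
  { unfold t, s. rewrite <- Rpower_pow by apply exp_pos.
    rewrite Rpower_mult, <- Rpower_plus. f_equal. unfold al; simpl; ring. }
  assert (Hs' : Rpower (INR N) (- (phis - 2 * al)) <= / (64 * K ^ 2)) by (apply HN2; lia).
  split.
  - apply Rmult_le_compat_r with (r := K ^ 4) in Ht; [|lra].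
    rewrite Rinv_mult, Rmult_assoc, Rinv_l, Rmult_1_r in Ht; lra.
  - rewrite Hs. apply Rmult_le_compat_l with (r := 64 * K ^ 2 * t ^ 2) in Hs';
      [|pose proof (pow2_ge_0 t); nra].
    replace (64 * K ^ 2 * t ^ 2 * / (64 * K ^ 2)) with (t ^ 2) in Hs' by (field; lra).
    lra.
Qed.

Lemma is_xi_minus_Gz N V t am : is_xi_minus N V t am -> t * Gz N V am 0 = 1.
Proof.
  intros (_ & _ & Hxi). rewrite Hxi. unfold Gz, avg. do 2 f_equal.
  apply rsum_ext. intros; f_equal; ring.
Qed.

Theorem lemma7p1 :
  forall (phis omega CV : R),
    0 < phis <= 2/3 ->
    0 < 1/3 - omega < phis / 2 ->
    0 < CV ->
    exists (C : R) (N0 : nat), 0 < C /\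
      forall (N : nat) (V : nat -> R) (mre mim : R -> R -> R) (am E a b : R),
        (N0 <= N)%nat ->
        sorted_V N V ->
        regular N V (Rpower (INR N) (- phis)) CV ->
        is_mfc N V (Rpower (INR N) (omega - 1/3)) mre mim ->
        is_xi_minus N V (Rpower (INR N) (omega - 1/3)) am ->
        xi_boundary (Rpower (INR N) (omega - 1/3)) mre mim E a b ->
        am <= a <= 3/4 ->
        / C * (Rpower (INR N) (omega - 1/3) * sqrt (Rabs (a - am))) <= b /\
        b <= C * (Rpower (INR N) (omega - 1/3) * sqrt (Rabs (a - am))).
Proof.
  intros phis omega CV Hphi Hom HCV.
  set (K := CV + 1). assert (HK : 1 <= K) by (unfold K; lra).
  destruct (large_N_parameters phis omega K Hom HK) as [N1 HN1].
  exists (1000000 * K ^ 14), (max 1 N1).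
  split; [pose proof (pow_R1_Rle K 14 HK); lra|].
  intros N V mre mim am E a b HN _ Hreg Hmfc Hxim Hxb Ha.
  assert (HN0 : (0 < N)%nat) by lia.
  destruct (HN1 N ltac:(lia)) as [HtK Hst].
  set (t := Rpower (INR N) (omega - 1/3)) in *. set (s := Rpower (INR N) (- phis)) in *.
  assert (Ht : 0 < t) by apply exp_pos. assert (Hs : 0 < s) by apply exp_pos.
  pose proof (boundary_eq_of_xi_boundary N V t mre mim E a b HN0 Ht Hmfc Hxb) as Hbd.
  destruct (edge_profile N V K t s HN0 HK Ht Hs HtK Hst
    (regular_left_Gz N V s CV K HCV ltac:(unfold K; lra) Hs Hreg)
    (regular_right_Gz N V s CV K HCV ltac:(unfold K; lra) Hs Hreg)
    (regular_gap N V s CV Hreg) am a b (proj1 Hxim) (proj1 (proj2 Hxim))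
    (is_xi_minus_Gz N V t am Hxim) Ha Hbd) as [H1 H2].
  rewrite Rabs_right by lra. pose proof (pow_R1_Rle K 14 HK).
  apply sqrt_comparable; try lra. apply (proj1 Hbd).
Qed.
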